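(* Let $G=(V,E)$ be a fixed connected simple undirected graph on $N\ge 2$ nodes, and consider the system on $G$ with update rule $x_i(k+1)=\operatorname{sign}[v_i(k)+\xi_i(k)]$ and noise level $\eta>0$. Let $D=\max_{i\in V}|N_i|$ be the maximum number of nodes in one neighborhood. (i) If $\eta\in(1-2/D,\,1]$, then for every initial condition $x(0)$, with probability one the system converges to agreement: the state eventually becomes (and thereafter remains) either the all-$(+1)$ state or the all-$(-1)$ state. (ii) If $\eta>1$, then for every initial condition, $\mathbf{E}\,S(k)\to 0$ as $k\to\infty$.
   Context: System on a graph: nodes $V=\{1,\dots,N\}$, each node $i$ carries a value $x_i(k)\in\{+1,-1\}$ at each time $k=0,1,2,\dots$. The neighborhood $N_i$ of node $i$ is the set consisting of node $i$ itself together with all nodes adjacent to $i$. Set $v_i(k)=\frac{1}{|N_i|}\sum_{j\in N_i}x_j(k)$. The update rule is $x_i(k+1)=\operatorname{sign}[v_i(k)+\xi_i(k)]$, where the noises $\xi_i(k)$ are uniformly distributed on $[-\eta,\eta]$, independent across $i$ and $k$, and independent of the initial state $x(0)$ (which may be arbitrary, possibly random). The state is $x(k)=(x_1(k),\dots,x_N(k))$ and the state sum is $S(k)=\sum_{i=1}^N x_i(k)$; the all-$(+1)$ and all-$(-1)$ states are denoted $+N$ and $-N$. The state process is a Markov chain on $\{\pm1\}^N$. *)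

From Stdlib Require Import Reals.
From mathcomp Require Import all_boot.

Set Implicit Arguments.
Unset Strict Implicit.
Unset Printing Implicit Defensive.
Local Open Scope R_scope.

Definition simple_graph (N : nat) (adj : rel 'I_N) : Prop :=
  (forall i j, adj i j = adj j i) /\ (forall i, adj i i = false).

Definition connected_graph (N : nat) (adj : rel 'I_N) : Prop :=
  forall i j, connect adj i j.

Definition nbhd (N : nat) (adj : rel 'I_N) (i : 'I_N) : {set 'I_N} :=
  [set j | (j == i) || adj i j].

Definition maxdeg (N : nat) (adj : rel 'I_N) : nat :=
  \max_(i : 'I_N) #|nbhd adj i|.

(* States: x : {ffun 'I_N -> bool}, true encodes +1 and false encodes -1. *)
Definition state (N : nat) := {ffun 'I_N -> bool}.

Definition spin (b : bool) : R := if b then 1 else (-1).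

Definition Rsum (T : finType) (f : T -> R) : R := \big[Rplus/0]_(t : T) f t.
Definition Rprod (T : finType) (f : T -> R) : R := \big[Rmult/1]_(t : T) f t.

Definition vavg (N : nat) (adj : rel 'I_N) (x : state N) (i : 'I_N) : R :=
  Rdiv (\big[Rplus/0]_(j in nbhd adj i) spin (x j)) (INR #|nbhd adj i|).

(* CDF of the uniform distribution on [-eta, eta]. *)
Definition unif_cdf (eta t : R) : R :=
  Rmin 1 (Rmax 0 ((t + eta) / (2 * eta))).

(* P(sign(v + xi) = +1) = P(xi > -v) for xi ~ U[-eta,eta]
   (the event v + xi = 0 has probability zero). *)
Definition p_plus (eta v : R) : R := 1 - unif_cdf eta (- v).

(* One-step transition probability of the Markov chain:
   the nodes update independently. *)
Definition trans (N : nat) (adj : rel 'I_N) (eta : R) (x y : state N) : R :=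
  Rprod (fun i : 'I_N =>
    if y i then p_plus eta (vavg adj x i) else 1 - p_plus eta (vavg adj x i)).

Fixpoint dist (N : nat) (adj : rel 'I_N) (eta : R) (mu0 : state N -> R)
  (k : nat) : state N -> R :=
  match k with
  | O => mu0
  | S k' => fun y => Rsum (fun x : state N => dist adj eta mu0 k' x * trans adj eta x y)
  end.

Definition is_distribution (N : nat) (mu : state N -> R) : Prop :=
  (forall x, 0 <= mu x) /\ Rsum mu = 1.

Definition agreement (N : nat) (x : state N) : bool :=
  [forall i, x i] || [forall i, ~~ x i].

(* Probability, starting from state s at time 0, that x(0), ..., x(M)
   all lie in the agreement set. *)
Fixpoint stay_prob (N : nat) (adj : rel 'I_N) (eta : R) (M : nat) (s : state N) : R :=
  match M with
  | O => if agreement s then 1 else 0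
  | S M' => if agreement s then
              Rsum (fun y : state N => trans adj eta s y * stay_prob adj eta M' y)
            else 0
  end.

(* P( x(K), x(K+1), ..., x(K+M) all in {+N, -N} ). *)
Definition agree_window_prob (N : nat) (adj : rel 'I_N) (eta : R)
  (mu0 : state N -> R) (K M : nat) : R :=
  Rsum (fun s : state N => dist adj eta mu0 K s * stay_prob adj eta M s).

Definition state_sum (N : nat) (x : state N) : R := Rsum (fun i : 'I_N => spin (x i)).

Definition expected_sum (N : nat) (adj : rel 'I_N) (eta : R)
  (mu0 : state N -> R) (k : nat) : R :=
  Rsum (fun x : state N => dist adj eta mu0 k x * state_sum x).

(* Both parts follow from the one-step law of a node: P(x_i(k+1) = +1) = p_plus eta (v_i),
   which is (1 + v_i / eta) / 2 while |v_i| <= eta and saturates at 0 or 1 outside.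

   (ii) For eta > 1 the average v_i never saturates, so the mean spins m_k(i) = E x_i(k)
   satisfy m_{k+1}(i) = (1 / eta) * (average of m_k over N_i); hence |m_k(i)| <= eta^-k
   and |E S(k)| <= N eta^-k.

   (i) For eta <= 1 a unanimous neighborhood is never overturned, so +N and -N are
   absorbing. For eta > 1 - 2/D a single +1 neighbor gives a node a positive chance of
   becoming +1, so the chain moves with positive probability to the state where exactly
   the nodes with a +1 neighbor are +1; on a connected graph this strictly increases the
   number of +1 nodes until agreement. Hence agreement is reached within N steps with
   probability at least some d > 0 from every state, the probability of not being absorbed
   by time jN is at most (1 - d)^j, and once absorbed the chain stays in agreement. *)

From HB Require Import structures.
From Stdlib Require Import Reals Lra.
From mathcomp Require Import all_boot zify.

Set Implicit Arguments.
Unset Strict Implicit.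
Unset Printing Implicit Defensive.
Local Open Scope R_scope.

HB.instance Definition _ := Monoid.isComLaw.Build R 0 Rplus
  (fun a b c => esym (Rplus_assoc a b c)) Rplus_comm Rplus_0_l.
HB.instance Definition _ := Monoid.isComLaw.Build R 1 Rmult
  (fun a b c => esym (Rmult_assoc a b c)) Rmult_comm Rmult_1_l.
HB.instance Definition _ := Monoid.isMulLaw.Build R 0 Rmult Rmult_0_l Rmult_0_r.
HB.instance Definition _ :=
  Monoid.isAddLaw.Build R Rmult Rplus Rmult_plus_distr_r Rmult_plus_distr_l.

Section RealBigops.
Variable T : finType.
Implicit Types (P : pred T) (f g : T -> R).

Lemma Rsum_ge0 P f :
  (forall t, P t -> 0 <= f t) -> 0 <= \big[Rplus/0]_(t | P t) f t.
Proof. by move=> f_ge0; apply: big_ind => //; [lra | move=> *; lra]. Qed.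

Lemma Rsum_le P f g : (forall t, P t -> f t <= g t) ->
  \big[Rplus/0]_(t | P t) f t <= \big[Rplus/0]_(t | P t) g t.
Proof.
by move=> le_fg; apply: (big_ind2 (fun a b => a <= b)) => //; [lra | move=> *; lra].
Qed.

Lemma Rsum_ge_term P f t0 : P t0 -> (forall t, P t -> 0 <= f t) ->
  f t0 <= \big[Rplus/0]_(t | P t) f t.
Proof.
move=> Pt0 f_ge0; rewrite (bigD1 t0) //=.
suff : 0 <= \big[Rplus/0]_(t | P t && (t != t0)) f t by lra.
by apply: Rsum_ge0 => t /andP[Pt _]; apply: f_ge0.
Qed.

Lemma Rabs_Rsum_le P f :
  Rabs (\big[Rplus/0]_(t | P t) f t) <= \big[Rplus/0]_(t | P t) Rabs (f t).
Proof.
apply: (big_ind2 (fun a b => Rabs a <= b)); first by rewrite Rabs_R0; lra.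
  by move=> a b c d ? ?; have := Rabs_triang a c; lra.
by move=> *; lra.
Qed.

Lemma Rsum_const (A : {pred T}) c : \big[Rplus/0]_(t in A) c = INR #|A| * c.
Proof.
rewrite big_const; elim: #|A| => [|n IHn]; first by rewrite /= Rmult_0_l.
by rewrite iterS IHn S_INR; lra.
Qed.

Lemma Rprod_ge0 f : (forall t, 0 <= f t) -> 0 <= \big[Rmult/1]_t f t.
Proof. by move=> f_ge0; apply: big_ind => //; [lra | move=> *; nra]. Qed.

Lemma Rprod_gt0 f : (forall t, 0 < f t) -> 0 < \big[Rmult/1]_t f t.
Proof. by move=> f_gt0; apply: big_ind => //; [lra | move=> *; nra]. Qed.

Lemma finite_pos_lbound g :
  (forall t, 0 < g t) -> exists d, 0 < d <= 1 /\ forall t, d <= g t.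
Proof.
move=> g_gt0.
suff [d [d01 le_dg]] : exists d, 0 < d <= 1 /\ forall t, t \in enum T -> d <= g t.
  by exists d; split=> // t; apply: le_dg; rewrite mem_enum.
elim: (enum T) => [|a s [d [d01 le_dg]]]; first by exists 1; split=> //; lra.
exists (Rmin d (g a)); split.
  have := Rmin_l d (g a); have := g_gt0 a.
  by split; [apply: Rmin_glb_lt; lra | lra].
move=> t; rewrite inE => /orP[/eqP -> | t_s]; first exact: Rmin_r.
by have := Rmin_l d (g a); have := le_dg t t_s; lra.
Qed.

End RealBigops.

Lemma Rsum_ffun_prod (I : finType) (g : I -> bool -> R) :
  \big[Rplus/0]_(y : {ffun I -> bool}) \big[Rmult/1]_i g i (y i)
  = \big[Rmult/1]_i (g i true + g i false).
Proof.
rewrite -bigA_distr_bigA; apply: eq_bigr => i _.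
by rewrite big_bool /= Rplus_comm.
Qed.

Lemma Un_cv_geometric_bound (u : nat -> R) C q : 0 <= q < 1 ->
  (forall k, Rabs (u k) <= C * q ^ k) -> Un_cv u 0.
Proof.
move=> q01 le_u e e_gt0.
have C_ge0 : 0 <= C by have := le_u 0%N; have := Rabs_pos (u 0%N); simpl; lra.
have q_lt1 : Rabs q < 1 by rewrite Rabs_right; lra.
have [K qK] := pow_lt_1_zero q q_lt1 (e / (C + 1)) ltac:(apply: Rdiv_lt_0_compat; lra).
exists K => k le_Kk; rewrite /R_dist Rminus_0_r.
have := qK k le_Kk; rewrite Rabs_right; last by apply/Rle_ge/pow_le; lra.
have := pow_le q k (proj1 q01); have := le_u k => ? ? lt_qk.
have : (C + 1) * q ^ k < e.
  have -> : e = (C + 1) * (e / (C + 1)) by field; lra.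
  by apply: Rmult_lt_compat_l; lra.
nra.
Qed.

Lemma p_plus_bounds eta v : 0 <= p_plus eta v <= 1.
Proof.
rewrite /p_plus /unif_cdf.
have := Rmin_l 1 (Rmax 0 ((- v + eta) / (2 * eta))).
have : 0 <= Rmin 1 (Rmax 0 ((- v + eta) / (2 * eta))).
  by apply: Rmin_glb; [lra | apply: Rmax_l].
lra.
Qed.

Section UniformNoise.
Variable eta : R.
Hypothesis eta_gt0 : 0 < eta.

Lemma p_plus_mid v : - eta <= v <= eta -> p_plus eta v = (1 + v / eta) / 2.
Proof.
move=> v_mid; rewrite /p_plus /unif_cdf; set r := (- v + eta) / (2 * eta).
have Er : r * (2 * eta) = - v + eta by rewrite /r; field; lra.
have r_ge0 : 0 <= r by nra.
have r_le1 : r <= 1 by nra.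
rewrite Rmax_right // Rmin_right // /r; field; lra.
Qed.

Lemma p_plus_high v : eta <= v -> p_plus eta v = 1.
Proof.
move=> v_ge; rewrite /p_plus /unif_cdf; set r := (- v + eta) / (2 * eta).
have Er : r * (2 * eta) = - v + eta by rewrite /r; field; lra.
have r_le0 : r <= 0 by nra.
by rewrite Rmax_left // Rmin_right; lra.
Qed.

Lemma p_plus_low v : v <= - eta -> p_plus eta v = 0.
Proof.
move=> v_le; rewrite /p_plus /unif_cdf; set r := (- v + eta) / (2 * eta).
have Er : r * (2 * eta) = - v + eta by rewrite /r; field; lra.
have r_ge1 : 1 <= r by nra.
by rewrite Rmax_right ?Rmin_left; lra.
Qed.

Lemma p_plus_gt0 v : - v < eta -> 0 < p_plus eta v.
Proof.
move=> lt_v; have [v_ge | v_lt] := Rle_lt_dec eta v; first by rewrite p_plus_high; lra.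
rewrite p_plus_mid; last lra.
have : -1 < v / eta.
  by apply/(Rmult_lt_reg_r eta) => //; rewrite /Rdiv Rmult_assoc Rinv_l; lra.
lra.
Qed.

Lemma p_plus_spin b : eta <= 1 -> p_plus eta (spin b) = if b then 1 else 0.
Proof.
by case: b => /= eta_le1; [rewrite p_plus_high | rewrite p_plus_low]; lra.
Qed.

Lemma p_plus_linear v : 1 < eta -> Rabs v <= 1 -> 2 * p_plus eta v - 1 = v / eta.
Proof.
move=> eta_gt1 v_le1; have := Rle_abs v; have := Rle_abs (- v); rewrite Rabs_Ropp.
by move=> ? ?; rewrite p_plus_mid; [field | split]; lra.
Qed.

End UniformNoise.

Lemma Rabs_spin b : Rabs (spin b) = 1.
Proof. by case: b; rewrite /spin ?Rabs_Ropp Rabs_R1. Qed.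

Section Neighborhoods.
Variables (N : nat) (adj : rel 'I_N).
Implicit Types (x : state N) (i j : 'I_N).

Lemma nbhd_refl i : i \in nbhd adj i.
Proof. by rewrite inE eqxx. Qed.

Lemma card_nbhd_gt0 i : 0 < INR #|nbhd adj i|.
Proof. by apply/lt_0_INR/ltP/card_gt0P; exists i; apply: nbhd_refl. Qed.

Lemma card_nbhd_le_maxdeg i : INR #|nbhd adj i| <= INR (maxdeg adj).
Proof. by apply/le_INR/leP; rewrite /maxdeg; exact: leq_bigmax. Qed.

Lemma card_nbhd_mul_vavg x i :
  INR #|nbhd adj i| * vavg adj x i = \big[Rplus/0]_(j in nbhd adj i) spin (x j).
Proof. by rewrite /vavg; have := card_nbhd_gt0 i; move=> ?; field; lra. Qed.

Lemma Rabs_vavg_le1 x i : Rabs (vavg adj x i) <= 1.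
Proof.
have n_gt0 := card_nbhd_gt0 i.
have : INR #|nbhd adj i| * Rabs (vavg adj x i) <= INR #|nbhd adj i|.
  have -> : INR #|nbhd adj i| * Rabs (vavg adj x i)
          = Rabs (\big[Rplus/0]_(j in nbhd adj i) spin (x j)).
    by rewrite -card_nbhd_mul_vavg Rabs_mult (Rabs_right (INR _)) //; lra.
  apply: Rle_trans (Rabs_Rsum_le _ _) _.
  by rewrite (eq_bigr (fun _ => 1)) => [|j _]; rewrite ?Rsum_const ?Rabs_spin //; lra.
nra.
Qed.

Lemma vavg_const x i b :
  (forall j, j \in nbhd adj i -> x j = b) -> vavg adj x i = spin b.
Proof.
move=> xb; have n_gt0 := card_nbhd_gt0 i.
have := card_nbhd_mul_vavg x i; rewrite (eq_bigr (fun _ => spin b)) => [|j /xb -> //].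
by rewrite Rsum_const; move=> E; apply: (Rmult_eq_reg_l (INR #|nbhd adj i|)); lra.
Qed.

Lemma vavg_ge_of_plus x i j : j \in nbhd adj i -> x j ->
  2 / INR #|nbhd adj i| - 1 <= vavg adj x i.
Proof.
move=> j_i xj; have n_gt0 := card_nbhd_gt0 i.
have : spin (x j) + 1 <= \big[Rplus/0]_(k in nbhd adj i) (spin (x k) + 1).
  apply: (Rsum_ge_term (f := fun k => spin (x k) + 1) j_i) => k _ /=.
  by case: (x k); rewrite /spin; lra.
rewrite big_split /= Rsum_const -card_nbhd_mul_vavg xj /spin.
set n := INR #|nbhd adj i| in n_gt0 * => le_sum.
apply: (Rmult_le_reg_l n) => //.
rewrite Rmult_minus_distr_l (_ : n * (2 / n) = 2); first lra.
by field; lra.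
Qed.

End Neighborhoods.

Section TransitionOperator.
Variables (N : nat) (adj : rel 'I_N) (eta : R).
Implicit Types (x y : state N) (f g : state N -> R).

Definition node_prob x i (b : bool) : R :=
  if b then p_plus eta (vavg adj x i) else 1 - p_plus eta (vavg adj x i).

Lemma transE x y : trans adj eta x y = \big[Rmult/1]_i node_prob x i (y i).
Proof. by []. Qed.

Lemma node_prob_ge0 x i b : 0 <= node_prob x i b.
Proof. by have := p_plus_bounds eta (vavg adj x i); rewrite /node_prob; case: b; lra. Qed.

Lemma trans_ge0 x y : 0 <= trans adj eta x y.
Proof. by apply: Rprod_ge0 => i; apply: node_prob_ge0. Qed.

Lemma trans_sum1 x : \big[Rplus/0]_y trans adj eta x y = 1.
Proof.
rewrite (eq_bigr (fun y : {ffun _ -> _} => \big[Rmult/1]_i node_prob x i (y i))) //.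
by rewrite Rsum_ffun_prod big1 // => i _; rewrite /node_prob; lra.
Qed.

Lemma trans_mean_spin x i :
  \big[Rplus/0]_y (trans adj eta x y * spin (y i)) = 2 * p_plus eta (vavg adj x i) - 1.
Proof.
(* Folding [spin (y i)] into the [i]-th factor makes the sum over [y] factorize. *)
pose g j b := node_prob x j b * (if j == i then spin b else 1).
have E y : trans adj eta x y * spin (y i) = \big[Rmult/1]_j g j (y j).
  rewrite /g big_split /= -transE; congr (_ * _).
  by rewrite (bigD1 i) //= eqxx big1 ?Rmult_1_r // => j /negbTE ->.
rewrite (eq_bigr _ (fun y _ => E y)) Rsum_ffun_prod (bigD1 i) //= big1 => [|j /negbTE j_i].
  by rewrite /g eqxx /node_prob /=; lra.
by rewrite /g j_i /node_prob; lra.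
Qed.

Definition transop f x : R := \big[Rplus/0]_y (trans adj eta x y * f y).

Lemma transop_const c x : transop (fun _ => c) x = c.
Proof. by rewrite /transop -big_distrl /= trans_sum1 Rmult_1_l. Qed.

Lemma transop_ge0 f x : (forall y, 0 <= f y) -> 0 <= transop f x.
Proof.
by move=> f_ge0; apply: Rsum_ge0 => y _; apply: Rmult_le_pos; [apply: trans_ge0 |].
Qed.

Lemma transop_ge_term f x y :
  (forall z, 0 <= f z) -> trans adj eta x y * f y <= transop f x.
Proof.
move=> f_ge0; apply: (Rsum_ge_term (f := fun z => trans adj eta x z * f z)) => // z _.
by apply: Rmult_le_pos; [apply: trans_ge0 |].
Qed.

Lemma iter_transop_ge0 n f x : (forall y, 0 <= f y) -> 0 <= iter n transop f x.
Proof. by move=> f_ge0; elim: n x => [|n IHn] x //=; apply: transop_ge0. Qed.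

Variable mu0 : state N -> R.
Hypothesis mu0_distr : is_distribution mu0.

Definition expect k f : R := \big[Rplus/0]_x (dist adj eta mu0 k x * f x).

Lemma dist_ge0 k x : 0 <= dist adj eta mu0 k x.
Proof.
elim: k x => [|k IHk] x /=; first by case: mu0_distr.
by apply: Rsum_ge0 => y _; apply: Rmult_le_pos => //; apply: trans_ge0.
Qed.

Lemma expectS k f : expect k.+1 f = expect k (transop f).
Proof.
rewrite /expect /transop /=.
under eq_bigr => y _ do rewrite /Rsum big_distrl /=.
rewrite exchange_big /=; apply: eq_bigr => x _; rewrite big_distrr /=.
by apply: eq_bigr => y _; rewrite Rmult_assoc.
Qed.

Lemma expectD k n f : expect (k + n) f = expect k (iter n transop f).
Proof.
elim: n f => [|n IHn] f; first by rewrite addn0.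
by rewrite addnS expectS IHn -iterSr.
Qed.

Lemma expect_le k f g : (forall x, f x <= g x) -> expect k f <= expect k g.
Proof.
by move=> le_fg; apply: Rsum_le => x _; apply: Rmult_le_compat_l; [apply: dist_ge0 |].
Qed.

Lemma expect_ge0 k f : (forall x, 0 <= f x) -> 0 <= expect k f.
Proof.
by move=> f_ge0; apply: Rsum_ge0 => x _; apply: Rmult_le_pos; [apply: dist_ge0 |].
Qed.

Lemma expect_const k c : expect k (fun _ => c) = c.
Proof.
elim: k => [|k IHk].
  by rewrite /expect /= -big_distrl /=; case: mu0_distr => _; rewrite /Rsum => ->; lra.
by rewrite expectS -[RHS]IHk; apply: eq_bigr => x _; rewrite transop_const.
Qed.

Lemma expect_affine k a b f :
  expect k (fun x => a * f x + b) = a * expect k f + b.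
Proof.
rewrite -[b in RHS](expect_const k) /expect big_distrr -big_split /=.
by apply: eq_bigr => x _; ring.
Qed.

Lemma Rabs_expect_le k f c : (forall x, Rabs (f x) <= c) -> Rabs (expect k f) <= c.
Proof.
move=> le_fc; rewrite -[c](expect_const k); apply: Rle_trans (Rabs_Rsum_le _ _) _.
apply: Rsum_le => x _; rewrite Rabs_mult Rabs_right; last exact/Rle_ge/dist_ge0.
by apply: Rmult_le_compat_l; [apply: dist_ge0 |].
Qed.

End TransitionOperator.

Section HighNoise.
Variables (N : nat) (adj : rel 'I_N) (eta : R).
Hypothesis eta_gt1 : 1 < eta.
Variable mu0 : state N -> R.
Hypothesis mu0_distr : is_distribution mu0.

Let eta_gt0 : 0 < eta. Proof. lra. Qed.

Definition mean_spin k i := expect adj eta mu0 k (fun x => spin (x i)).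

Lemma transop_spin x i : transop adj eta (fun y => spin (y i)) x = vavg adj x i / eta.
Proof. by rewrite /transop trans_mean_spin p_plus_linear //; apply: Rabs_vavg_le1. Qed.

Lemma mean_spinS k i : mean_spin k.+1 i =
  / (INR #|nbhd adj i| * eta) * \big[Rplus/0]_(j in nbhd adj i) mean_spin k j.
Proof.
have n_gt0 := card_nbhd_gt0 adj i.
rewrite /mean_spin expectS /expect exchange_big /= big_distrr /=.
apply: eq_bigr => x _; rewrite transop_spin /vavg -big_distrr /=.
by set n := INR _ in n_gt0 *; field; lra.
Qed.

Lemma Rabs_mean_spin_le k i : Rabs (mean_spin k i) <= (/ eta) ^ k.
Proof.
elim: k i => [|k IHk] i.
  by apply: Rabs_expect_le => // x; rewrite Rabs_spin /=; lra.
have n_gt0 := card_nbhd_gt0 adj i.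
have c_gt0 : 0 < / (INR #|nbhd adj i| * eta) by apply/Rinv_0_lt_compat/Rmult_lt_0_compat.
rewrite mean_spinS Rabs_mult (Rabs_right (/ _)); last lra.
apply: Rle_trans (Rmult_le_compat_l _ _ _ (Rlt_le _ _ c_gt0) (Rabs_Rsum_le _ _)) _.
have le_sum : \big[Rplus/0]_(j in nbhd adj i) Rabs (mean_spin k j)
              <= \big[Rplus/0]_(j in nbhd adj i) (/ eta) ^ k.
  by apply: Rsum_le => j _; apply: IHk.
apply: Rle_trans (Rmult_le_compat_l _ _ _ (Rlt_le _ _ c_gt0) le_sum) _.
rewrite Rsum_const /=; set n := INR _ in n_gt0 *; right; field; lra.
Qed.

Lemma expected_sumE k : expected_sum adj eta mu0 k = \big[Rplus/0]_i mean_spin k i.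
Proof.
rewrite /expected_sum /Rsum /mean_spin /expect /state_sum /Rsum.
by under eq_bigr => x _ do rewrite big_distrr /=; rewrite exchange_big.
Qed.

Lemma Rabs_expected_sum_le k : Rabs (expected_sum adj eta mu0 k) <= INR N * (/ eta) ^ k.
Proof.
rewrite expected_sumE; apply: Rle_trans (Rabs_Rsum_le _ _) _.
apply: Rle_trans (Rsum_le (g := fun _ => (/ eta) ^ k) _) _ => [i _ | ].
  exact: Rabs_mean_spin_le.
by rewrite (eq_bigl (fun i => i \in 'I_N)) // Rsum_const card_ord; lra.
Qed.

Lemma expected_sum_cvg0 : Un_cv (expected_sum adj eta mu0) 0.
Proof.
apply: (Un_cv_geometric_bound (C := INR N) (q := / eta)); last exact: Rabs_expected_sum_le.
split; first exact/Rlt_le/Rinv_0_lt_compat.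
by rewrite -Rinv_1; apply: Rinv_lt_contravar; lra.
Qed.

End HighNoise.

Definition agree_ind {N : nat} (x : state N) : R := if agreement x then 1 else 0.

Section LowNoise.
Variables (N : nat) (adj : rel 'I_N) (eta : R).
Hypotheses (eta_gt0 : 0 < eta) (eta_le1 : eta <= 1).
Implicit Types (x y : state N) (f : state N -> R).

Lemma agreement_const x : agreement x -> forall i j, x j = x i.
Proof.
by case/orP=> /forallP x_const i j; [rewrite !x_const | rewrite !(negbTE (x_const _))].
Qed.

Lemma node_prob_agree x i b :
  agreement x -> node_prob adj eta x i b = if b == x i then 1 else 0.
Proof.
move=> x_agree; rewrite /node_prob (vavg_const (b := x i)) => [|j _].
  by rewrite p_plus_spin //; case: b; case: (x i) => /=; lra.
exact: agreement_const.
Qed.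

Lemma trans_agree x y : agreement x -> trans adj eta x y = if y == x then 1 else 0.
Proof.
move=> x_agree; rewrite transE; case: eqP => [-> | /eqP y_neq_x].
  by rewrite big1 // => i _; rewrite node_prob_agree // eqxx.
have [i yi_neq] : exists i, y i != x i.
  apply/existsP; apply: contraR y_neq_x => /existsPn y_eq.
  by apply/eqP/ffunP => i; apply/eqP/negPn.
by rewrite (bigD1 i) //= node_prob_agree // (negbTE yi_neq) Rmult_0_l.
Qed.

Lemma transop_agree f x : agreement x -> transop adj eta f x = f x.
Proof.
move=> x_agree; rewrite /transop (bigD1 x) //= trans_agree // eqxx.
rewrite big1 => [|y /negbTE y_neq]; first lra.
by rewrite trans_agree // y_neq Rmult_0_l.
Qed.

Lemma iter_transop_agree n f x : agreement x -> iter n (transop adj eta) f x = f x.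
Proof. by move=> x_agree; elim: n => //= n IHn; rewrite transop_agree. Qed.

Lemma agree_ind_ge0 x : 0 <= agree_ind x.
Proof. by rewrite /agree_ind; case: ifP => _; lra. Qed.

Lemma stay_prob_ge0 M x : 0 <= stay_prob adj eta M x.
Proof.
elim: M x => [|M IHM] x /=; case: ifP => _; try lra.
exact: transop_ge0.
Qed.

Lemma stay_prob_agree M x : agreement x -> stay_prob adj eta M x = 1.
Proof.
elim: M x => [|M IHM] x x_agree /=; rewrite x_agree //.
by change (transop adj eta (stay_prob adj eta M) x = 1); rewrite transop_agree // IHM.
Qed.

Lemma agree_ind_le_stay_prob M x : agree_ind x <= stay_prob adj eta M x.
Proof.
rewrite /agree_ind; case: ifP => x_agree; last exact: stay_prob_ge0.
by rewrite stay_prob_agree //; lra.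
Qed.

Variable mu0 : state N -> R.
Hypothesis mu0_distr : is_distribution mu0.

Lemma not_absorbed_le n d : 0 < d <= 1 ->
  (forall x, d <= iter n (transop adj eta) agree_ind x) ->
  forall j, 1 - expect adj eta mu0 (j * n) agree_ind <= (1 - d) ^ j.
Proof.
move=> d01 absorb_d; elim=> [|j IHj] /=.
  by have := expect_ge0 adj eta mu0_distr (0 * n) agree_ind_ge0; lra.
have step : forall x, (1 - d) * agree_ind x + d <= iter n (transop adj eta) agree_ind x.
  move=> x; rewrite [agree_ind x]/agree_ind; case: ifP => x_agree.
    by rewrite iter_transop_agree // /agree_ind x_agree; nra.
  by have := absorb_d x; nra.
have := expect_le adj eta mu0_distr (j * n) step.
rewrite expect_affine // -expectD addnC -mulSn => le_step.
have : 0 <= 1 - d by lra.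
nra.
Qed.

End LowNoise.

Section Absorption.
Variables (N : nat) (adj : rel 'I_N) (eta : R).
Hypotheses (eta_gt0 : 0 < eta) (eta_le1 : eta <= 1).
Hypothesis eta_gt_threshold : 1 - 2 / INR (maxdeg adj) < eta.
Hypothesis adj_sym : forall i j, adj i j = adj j i.
Hypothesis adj_connected : forall i j, connect adj i j.
Implicit Types (x : state N).

Definition spread x : state N := [ffun i => [exists j in nbhd adj i, x j]].

Definition count_plus x : nat := #|[set i | x i]|.

Lemma exists_mixed_edge x : ~~ agreement x -> exists u v, [/\ adj u v, x u & ~~ x v].
Proof.
rewrite negb_or => /andP[/forallPn[b xb] /forallPn[a]]; rewrite negbK => xa.
have /connectP[p p_path b_last] := adj_connected a b; rewrite b_last {b b_last} in xb.
elim: p a xa p_path xb => [|c p IHp] a xa /=; first by rewrite xa.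
case/andP=> adj_ac p_path; case xc: (x c); first exact: IHp.
by exists a, c; rewrite adj_ac xa xc.
Qed.

Lemma count_plus_spread x : ~~ agreement x -> (count_plus x < count_plus (spread x))%N.
Proof.
move=> /exists_mixed_edge[u [v [adj_uv xu xv]]].
apply: proper_card; apply/properP; split.
  apply/subsetP => i; rewrite !inE ffunE => xi.
  by apply/exists_inP; exists i => //; apply: nbhd_refl.
exists v; rewrite !inE ?(negbTE xv) // ffunE.
by apply/exists_inP; exists u; rewrite // inE adj_sym adj_uv orbT.
Qed.

(* This is where [1 - 2 / D < eta] is needed: one [+1] neighbor already gives a positive
   chance of [+1]. *)
Lemma trans_spread_gt0 x : 0 < trans adj eta x (spread x).
Proof.
apply: Rprod_gt0 => i; rewrite /node_prob ffunE.
case: exists_inP => [[j j_i xj] | no_plus].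
  apply: p_plus_gt0 => //.
  have n_gt0 := card_nbhd_gt0 adj i.
  have := vavg_ge_of_plus j_i xj; have := card_nbhd_le_maxdeg adj i => n_le_D.
  have : 2 / INR (maxdeg adj) <= 2 / INR #|nbhd adj i|.
    by apply: Rmult_le_compat_l; [lra | apply: Rinv_le_contravar].
  lra.
rewrite (vavg_const (b := false)) => [|j j_i]; first by rewrite p_plus_spin //; lra.
by apply/negbTE/negP => xj; apply: no_plus; exists j.
Qed.

Lemma iter_transop_agree_ind_gt0 m x :
  (N <= count_plus x + m)%N -> 0 < iter m (transop adj eta) agree_ind x.
Proof.
elim: m x => [|m IHm] x le_N.
  suff x_agree : agreement x by rewrite /= /agree_ind x_agree; lra.
  rewrite addn0 in le_N; apply/orP; left; apply/forallP => i.
  have : [set i | x i] = [set: 'I_N] by apply/eqP; rewrite eqEcard subsetT cardsT card_ord.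
  by move/setP/(_ i); rewrite !inE.
case x_agree: (agreement x); first by rewrite iter_transop_agree // /agree_ind x_agree; lra.
have lt_spread := count_plus_spread (negbT x_agree).
have := IHm (spread x) ltac:(lia); have := trans_spread_gt0 x.
have f_ge0 y : 0 <= iter m (transop adj eta) agree_ind y.
  by apply: iter_transop_ge0 => z; apply: agree_ind_ge0.
have := transop_ge_term adj eta x (spread x) f_ge0.
rewrite iterS; nra.
Qed.

Lemma absorption_lbound :
  exists d, 0 < d <= 1 /\ forall x, d <= iter N (transop adj eta) agree_ind x.
Proof.
by apply: finite_pos_lbound => x; apply: iter_transop_agree_ind_gt0; apply: leq_addl.
Qed.

Variable mu0 : state N -> R.
Hypothesis mu0_distr : is_distribution mu0.

Lemma agree_window_prob_eventually_ge eps : 0 < eps ->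
  exists K, forall M, 1 - eps <= agree_window_prob adj eta mu0 K M.
Proof.
move=> eps_gt0; have [d [d01 absorb_d]] := absorption_lbound.
have [J dJ] : exists J, Rabs ((1 - d) ^ J) < eps.
  have [J dJ] := pow_lt_1_zero (1 - d) ltac:(rewrite Rabs_right; lra) eps eps_gt0.
  by exists J; apply: dJ.
exists (J * N)%nat => M.
have := not_absorbed_le eta_gt0 eta_le1 mu0_distr d01 absorb_d J.
have : expect adj eta mu0 (J * N) agree_ind <= agree_window_prob adj eta mu0 (J * N) M.
  by apply: expect_le => // x; apply: agree_ind_le_stay_prob.
move: dJ; rewrite Rabs_right; first lra.
by apply/Rle_ge/pow_le; lra.
Qed.

End Absorption.

Theorem proposition1 (N : nat) (adj : rel 'I_N) (eta : R)
  (HN : (2 <= N)%N) (Hsimple : simple_graph adj) (Hconn : connected_graph adj)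
  (Heta : (0 < eta)) :
  ((1 - 2 / INR (maxdeg adj) < eta <= 1) ->
   forall mu0 : state N -> R, is_distribution mu0 ->
   forall eps : R, (0 < eps) ->
   exists K : nat, forall M : nat, (1 - eps <= agree_window_prob adj eta mu0 K M))
  /\
  ((1 < eta) ->
   forall mu0 : state N -> R, is_distribution mu0 ->
   Un_cv (expected_sum adj eta mu0) 0).
Proof.
split.
- move=> [eta_gt_threshold eta_le1] mu0 mu0_distr eps eps_gt0.
  exact (agree_window_prob_eventually_ge Heta eta_le1 eta_gt_threshold
    (proj1 Hsimple) Hconn mu0_distr eps_gt0).
- by move=> eta_gt1 mu0 mu0_distr; apply: expected_sum_cvg0.
Qed.
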